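(* Let $X\in\mathbb{R}^{n\times d}$ with rows $x_1,\dots,x_n$, weighted by $w\in\mathbb{R}^n_{>0}$, be $\mu$-complex, and let $\mathcal{W}=\sum_{j=1}^n w_j$. If $i\in[n]$ and $\beta\in\mathbb{R}^d$ satisfy $x_i\beta\le 0.5$, then $w_i\,g(x_i\beta)\le\frac{(20+\mu)w_i}{\mathcal{W}}\,f_w(X\beta)$.
   Context: $g(z)=\ln(1+e^z)$ and $f_w(X\beta)=\sum_{j=1}^n w_j g(x_j\beta)$. $D_w$ is the diagonal matrix with $(D_w)_{ii}=w_i$. For a vector $v$, $v^+$ and $v^-$ denote the vectors of its positive and negative entries. $\mu_w(X)=\sup_{\beta:\,D_wX\beta\neq0}\|(D_wX\beta)^+\|_1/\|(D_wX\beta)^-\|_1$, and $X$ weighted by $w$ is $\mu$-complex if $\mu_w(X)\le\mu$. *)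

From Stdlib Require Import Reals List.
Import ListNotations.
Open Scope R_scope.

Definition rsum (n : nat) (f : nat -> R) : R :=
  fold_right Rplus 0 (map f (seq 0 n)).

Definition g (z : R) : R := ln (1 + exp z).

(* A matrix X in R^{n x d} is a function of row/column indices (0-based);
   x_j beta = sum_k X j k * beta k. *)
Definition rowdot (d : nat) (X : nat -> nat -> R) (beta : nat -> R) (j : nat) : R :=
  rsum d (fun k => X j k * beta k).

Definition f_w (n d : nat) (w : nat -> R) (X : nat -> nat -> R) (beta : nat -> R) : R :=
  rsum n (fun j => w j * g (rowdot d X beta j)).

Definition DwXb (d : nat) (w : nat -> R) (X : nat -> nat -> R) (beta : nat -> R) (j : nat) : R :=
  w j * rowdot d X beta j.

Definition pos_norm1 (n : nat) (v : nat -> R) : R := rsum n (fun j => Rmax (v j) 0).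
Definition neg_norm1 (n : nat) (v : nat -> R) : R := rsum n (fun j => Rmax (- v j) 0).

(* X weighted by w is mu-complex: mu_w(X) <= mu, i.e. every ratio in the
   supremum (taken as +infinity when the negative part vanishes) is <= mu. *)
Definition mu_complex (n d : nat) (w : nat -> R) (X : nat -> nat -> R) (mu : R) : Prop :=
  forall beta : nat -> R,
    (exists j, (j < n)%nat /\ DwXb d w X beta j <> 0) ->
    0 < neg_norm1 n (DwXb d w X beta) /\
    pos_norm1 n (DwXb d w X beta) / neg_norm1 n (DwXb d w X beta) <= mu.

(* Split the indices by whether the margin z_j = x_j beta is at least -2.  There the
   loss already pays for the weight, since g(z_j) >= g(-2) >= 1/10; where z_j < -2
   the weight is paid for by the negative part, w_j <= |w_j z_j| / 2.  Hence
   W <= 10 f + ||(D_w X beta)^-||_1 / 2.  Applying mu-complexity to -beta bounds the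
   negative part by mu ||(D_w X beta)^+||_1, and g(z) >= max(z, 0) bounds the
   positive part by f, so W <= (10 + mu/2) f.  Finally g(x_i beta) <= 2 because
   x_i beta <= 1/2. *)
From Stdlib Require Import Reals List.
From Stdlib Require Import Lra Lia Classical FunctionalExtensionality.
Open Scope R_scope.

Lemma fold_right_Rplus_init (a : R) (l : list R) :
  fold_right Rplus a l = fold_right Rplus 0 l + a.
Proof. induction l as [|x l IH]; simpl; [ring | rewrite IH; ring]. Qed.

Lemma rsum_S (n : nat) (f : nat -> R) : rsum (S n) f = rsum n f + f n.
Proof.
  unfold rsum; rewrite seq_S, map_app, fold_right_app; simpl.
  rewrite fold_right_Rplus_init; ring.
Qed.

Lemma rsum_le (n : nat) (f h : nat -> R) :
  (forall j, (j < n)%nat -> f j <= h j) -> rsum n f <= rsum n h.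
Proof.
  induction n as [|n IH]; intros H; [unfold rsum; simpl; lra|].
  rewrite !rsum_S.
  assert (f n <= h n) by (apply H; lia).
  assert (rsum n f <= rsum n h) by (apply IH; intros j Hj; apply H; lia).
  lra.
Qed.

Lemma rsum_ext (n : nat) (f h : nat -> R) :
  (forall j, (j < n)%nat -> f j = h j) -> rsum n f = rsum n h.
Proof. intros H; apply Rle_antisym; apply rsum_le; intros j Hj; rewrite (H j Hj); lra. Qed.

Lemma rsum_add (n : nat) (f h : nat -> R) :
  rsum n (fun j => f j + h j) = rsum n f + rsum n h.
Proof.
  induction n as [|n IH]; [unfold rsum; simpl; ring|].
  rewrite !rsum_S, IH; ring.
Qed.

Lemma rsum_scale (n : nat) (c : R) (f : nat -> R) :
  rsum n (fun j => c * f j) = c * rsum n f.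
Proof.
  induction n as [|n IH]; [unfold rsum; simpl; ring|].
  rewrite !rsum_S, IH; ring.
Qed.

Lemma rsum_nonneg (n : nat) (f : nat -> R) :
  (forall j, (j < n)%nat -> 0 <= f j) -> 0 <= rsum n f.
Proof.
  induction n as [|n IH]; intros H; [unfold rsum; simpl; lra|].
  rewrite rsum_S.
  assert (0 <= f n) by (apply H; lia).
  assert (0 <= rsum n f) by (apply IH; intros j Hj; apply H; lia).
  lra.
Qed.

Lemma rsum_pos (n : nat) (f : nat -> R) :
  (0 < n)%nat -> (forall j, (j < n)%nat -> 0 < f j) -> 0 < rsum n f.
Proof.
  destruct n as [|n]; intros Hn H; [lia|].
  rewrite rsum_S.
  assert (0 < f n) by (apply H; lia).
  assert (0 <= rsum n f) by (apply rsum_nonneg; intros j Hj; apply Rlt_le, H; lia).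
  lra.
Qed.

Lemma pos_norm1_nonneg (n : nat) (v : nat -> R) : 0 <= pos_norm1 n v.
Proof. apply rsum_nonneg; intros; apply Rmax_r. Qed.

Lemma pos_norm1_opp (n : nat) (v : nat -> R) :
  pos_norm1 n (fun j => - v j) = neg_norm1 n v.
Proof. reflexivity. Qed.

Lemma neg_norm1_opp (n : nat) (v : nat -> R) :
  neg_norm1 n (fun j => - v j) = pos_norm1 n v.
Proof. apply rsum_ext; intros j _; rewrite Ropp_involutive; reflexivity. Qed.

Lemma rowdot_opp (d : nat) (X : nat -> nat -> R) (beta : nat -> R) (j : nat) :
  rowdot d X (fun k => - beta k) j = - rowdot d X beta j.
Proof.
  unfold rowdot.
  replace (- rsum d (fun k => X j k * beta k)) with (-1 * rsum d (fun k => X j k * beta k))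
    by ring.
  rewrite <- rsum_scale; apply rsum_ext; intros; ring.
Qed.

Lemma DwXb_opp (d : nat) (w : nat -> R) (X : nat -> nat -> R) (beta : nat -> R) :
  DwXb d w X (fun k => - beta k) = (fun j => - DwXb d w X beta j).
Proof.
  apply functional_extensionality; intros j.
  unfold DwXb; rewrite rowdot_opp; ring.
Qed.

Lemma ln_le_compat (x y : R) : 0 < x -> x <= y -> ln x <= ln y.
Proof.
  intros Hx [Hxy | ->]; [apply Rlt_le, ln_increasing; lra | lra].
Qed.

Lemma exp_le_compat (x y : R) : x <= y -> exp x <= exp y.
Proof. intros [Hxy | ->]; [apply Rlt_le, exp_increasing; lra | lra]. Qed.

Lemma ln_ge_1_sub_inv (x : R) : 0 < x -> 1 - / x <= ln x.
Proof.
  intros Hx.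
  pose proof (exp_ineq1_le (ln (/ x))) as H.
  rewrite exp_ln, ln_Rinv in H by (try apply Rinv_0_lt_compat; lra).
  lra.
Qed.

Lemma g_nonneg (z : R) : 0 <= g z.
Proof.
  unfold g; rewrite <- ln_1.
  apply ln_le_compat; [lra | pose proof (exp_pos z); lra].
Qed.

Lemma g_ge_id (z : R) : z <= g z.
Proof.
  unfold g; rewrite <- (ln_exp z) at 1.
  apply ln_le_compat; [apply exp_pos | lra].
Qed.

Lemma g_le_compat (a b : R) : a <= b -> g a <= g b.
Proof.
  intros H; unfold g.
  apply ln_le_compat; [pose proof (exp_pos a); lra |].
  pose proof (exp_le_compat a b); lra.
Qed.

Lemma g_le_2 (z : R) : z <= 1 -> g z <= 2.
Proof.
  intros H; unfold g; rewrite <- (ln_exp 2).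
  apply ln_le_compat; [pose proof (exp_pos z); lra |].
  assert (exp z <= exp 1) by (apply exp_le_compat; lra).
  assert (2 <= exp 1) by (pose proof (exp_ineq1_le 1); lra).
  replace 2 with (1 + 1) by ring; rewrite exp_plus.
  nra.
Qed.

Lemma g_m2_ge : 1 / 10 <= g (-2).
Proof.
  set (y := exp (-2)).
  assert (Hy : 0 < y) by apply exp_pos.
  assert (Hy9 : 1 <= 9 * y).
  { assert (Hyee : y * (exp 1 * exp 1) = 1).
    { unfold y; rewrite <- !exp_plus; replace (-2 + (1 + 1)) with 0 by ring; apply exp_0. }
    pose proof exp_le_3; pose proof (exp_pos 1).
    assert (exp 1 * exp 1 <= 9) by nra.
    nra. }
  pose proof (ln_ge_1_sub_inv (1 + y)) as Hln.
  unfold g; fold y.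
  assert (1 / 10 <= 1 - / (1 + y)).
  { apply Rmult_le_reg_r with (1 + y); [lra|].
    replace ((1 - / (1 + y)) * (1 + y)) with y by (field; lra).
    lra. }
  pose proof (Hln ltac:(lra)); lra.
Qed.

Lemma weight_le_loss_or_neg_part (w z : R) :
  0 < w -> w <= 10 * (w * g z) + / 2 * Rmax (- (w * z)) 0.
Proof.
  intros Hw.
  destruct (Rle_lt_dec (-2) z) as [Hz | Hz].
  - assert (1 / 10 <= g z) by (pose proof g_m2_ge; pose proof (g_le_compat _ _ Hz); lra).
    pose proof (Rmax_r (- (w * z)) 0).
    nra.
  - pose proof (Rmax_l (- (w * z)) 0).
    pose proof (g_nonneg z).
    nra.
Qed.

Section WeightedLogisticLoss.

Variables (n d : nat) (X : nat -> nat -> R) (w : nat -> R) (beta : nat -> R).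
Hypothesis hw : forall j, (j < n)%nat -> 0 < w j.

Let v := DwXb d w X beta.

Lemma rsum_weights_le_loss_neg_norm1 :
  rsum n w <= 10 * f_w n d w X beta + / 2 * neg_norm1 n v.
Proof.
  unfold f_w, neg_norm1; rewrite <- !rsum_scale, <- rsum_add.
  apply rsum_le; intros j Hj.
  apply weight_le_loss_or_neg_part, hw, Hj.
Qed.

Lemma pos_norm1_le_loss : pos_norm1 n v <= f_w n d w X beta.
Proof.
  apply rsum_le; intros j Hj; unfold v, DwXb.
  specialize (hw j Hj).
  pose proof (g_ge_id (rowdot d X beta j)); pose proof (g_nonneg (rowdot d X beta j)).
  apply Rmax_lub; nra.
Qed.

Lemma neg_norm1_le_mu_pos_norm1 (mu : R) :
  mu_complex n d w X mu -> neg_norm1 n v <= mu * pos_norm1 n v.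
Proof.
  intros hmu.
  destruct (classic (exists j, (j < n)%nat /\ v j <> 0)) as [[j [Hj Hvj]] | Hzero].
  - (* mu-complexity of -beta compares the two norms of v in the opposite order *)
    assert (Hex : exists j, (j < n)%nat /\ DwXb d w X (fun k => - beta k) j <> 0).
    { exists j; split; [exact Hj|]; rewrite DwXb_opp; intros Hv; apply Hvj; unfold v; lra. }
    destruct (hmu _ Hex) as [Hpos Hratio].
    rewrite DwXb_opp, neg_norm1_opp in Hpos.
    rewrite DwXb_opp, pos_norm1_opp, neg_norm1_opp in Hratio.
    fold v in Hpos, Hratio.
    apply Rmult_le_compat_r with (r := pos_norm1 n v) in Hratio; [| lra].
    unfold Rdiv in Hratio; rewrite Rmult_assoc, Rinv_l in Hratio by lra.
    lra.
  - assert (Hv0 : forall j, (j < n)%nat -> v j = 0)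
      by (intros j Hj; apply NNPP; intros Hvj; apply Hzero; eauto).
    unfold neg_norm1, pos_norm1; rewrite <- rsum_scale.
    apply rsum_le; intros j Hj; rewrite (Hv0 j Hj), Ropp_0, Rmax_left; lra.
Qed.

Lemma rsum_weights_le_loss (mu : R) :
  0 <= mu -> mu_complex n d w X mu -> rsum n w <= (10 + mu / 2) * f_w n d w X beta.
Proof.
  intros Hmu hmu.
  pose proof rsum_weights_le_loss_neg_norm1.
  pose proof (neg_norm1_le_mu_pos_norm1 mu hmu).
  pose proof pos_norm1_le_loss.
  pose proof (pos_norm1_nonneg n v).
  nra.
Qed.

End WeightedLogisticLoss.

Theorem lemma8 (n d : nat) (X : nat -> nat -> R) (w : nat -> R) (mu : R)
  (hw : forall j, (j < n)%nat -> 0 < w j)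
  (hmu1 : 1 <= mu)
  (hmu : mu_complex n d w X mu)
  (i : nat) (hi : (i < n)%nat) (beta : nat -> R)
  (hb : rowdot d X beta i <= 1/2) :
  w i * g (rowdot d X beta i) <=
    (20 + mu) * w i / rsum n w * f_w n d w X beta.
Proof.
  assert (HW : 0 < rsum n w) by (apply rsum_pos; [lia | exact hw]).
  assert (HWf := rsum_weights_le_loss n d X w beta hw mu ltac:(lra) hmu).
  assert (Hg : g (rowdot d X beta i) <= 2) by (apply g_le_2; lra).
  assert (Hwi := hw i hi).
  unfold Rdiv; apply Rmult_le_reg_r with (rsum n w); [exact HW |].
  replace ((20 + mu) * w i * / rsum n w * f_w n d w X beta * rsum n w)
    with (w i * ((20 + mu) * f_w n d w X beta)) by (field; lra).
  rewrite Rmult_assoc; apply Rmult_le_compat_l; [lra |].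
  pose proof (g_nonneg (rowdot d X beta i)).
  nra.
Qed.
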